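(* Let $\rho>0$, $\epsilon_0>0$, and $0<\lambda_1<\lambda_2$ with $\lambda_1(1+\epsilon_0)\neq\lambda_2$. For $\beta$ with $\frac{\epsilon_0}{1+\epsilon_0}<\beta<1$ (equivalently $\beta>(1-\beta)\epsilon_0$, $\beta<1$) define $A(\beta)=\frac{\epsilon_0}{\rho[\beta-(1-\beta)\epsilon_0]}$, $B(\beta)=\frac{\epsilon_0}{\rho(1-\beta)}$, $\zeta(\beta)=\max\{A(\beta),B(\beta)\}$. Then the minimization problem $$\min_\beta\ 1-e^{-(\lambda_2A(\beta)+\lambda_1\zeta(\beta))}\quad\text{s.t. } 0\le\beta\le1,\ \beta>(1-\beta)\epsilon_0$$ has optimal solution $$\beta^*=\frac{\sqrt{1+\epsilon_0}\,(\epsilon_0\lambda_1-\lambda_2)+\sqrt{\lambda_1\lambda_2}}{\sqrt{1+\epsilon_0}\,[\lambda_1(1+\epsilon_0)-\lambda_2]}.$$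
   Context: Interpretation: downlink two-user NOMA with users at distances $d_1<d_2$, $\lambda_k=d_k^\alpha$ ($\alpha>0$ the path loss exponent), transmit SNR $\rho$, target SNR $\epsilon_0=2^{R_0^*}-1$, and $\beta$ the power fraction given to the farther user; the objective is the common outage probability when the users are ordered correctly. At $\beta=1$, $B$ is infinite and the objective is interpreted as $1$. *)

From Stdlib Require Import Reals.
Open Scope R_scope.

Definition A_fun (rho eps0 beta : R) : R :=
  eps0 / (rho * (beta - (1 - beta) * eps0)).

Definition B_fun (rho eps0 beta : R) : R :=
  eps0 / (rho * (1 - beta)).

Definition zeta_fun (rho eps0 beta : R) : R :=
  Rmax (A_fun rho eps0 beta) (B_fun rho eps0 beta).

(* Objective 1 - exp(-(lambda2 A + lambda1 zeta)); at beta = 1, B is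
   infinite and the objective is interpreted as 1. *)
Definition objective (rho eps0 lam1 lam2 beta : R) : R :=
  if Req_EM_T beta 1 then 1
  else 1 - exp (- (lam2 * A_fun rho eps0 beta + lam1 * zeta_fun rho eps0 beta)).

Definition feasible (eps0 beta : R) : Prop :=
  0 <= beta <= 1 /\ (1 - beta) * eps0 < beta.

Definition beta_star (eps0 lam1 lam2 : R) : R :=
  (sqrt (1 + eps0) * (eps0 * lam1 - lam2) + sqrt (lam1 * lam2)) /
  (sqrt (1 + eps0) * (lam1 * (1 + eps0) - lam2)).

(* Put u = 1 - beta and v = beta - (1 - beta) eps0, so that v + (1 + eps0) u = 1.
   Dropping the max gives an exponent of at least
   (eps0 / rho) (lam2 / v + lam1 / u), and by Sedrakyan's form of Cauchy-Schwarz,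
   (x + y)^2 / (v + w) <= x^2 / v + y^2 / w with x = sqrt lam2,
   y = sqrt (lam1 (1 + eps0)) and w = (1 + eps0) u, this is at least
   (eps0 / rho) (sqrt lam2 + sqrt (lam1 (1 + eps0)))^2.  Equality in
   Cauchy-Schwarz forces v : u = sqrt lam2 : sqrt (lam1 / (1 + eps0)), which is
   beta_star; there u <= v, so the max is B and nothing was lost by dropping it.
   Since 1 - exp (- x) increases with x, beta_star minimises the objective. *)

From Stdlib Require Import Reals Lra Psatz.
Open Scope R_scope.

Lemma Rsqr_plus_div_le (x y v w : R) :
  0 < v -> 0 < w -> (x + y) ^ 2 / (v + w) <= x ^ 2 / v + y ^ 2 / w.
Proof.
  intros Hv Hw.
  assert (Hgap : x ^ 2 / v + y ^ 2 / w - (x + y) ^ 2 / (v + w)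
                 = (x * w - y * v) ^ 2 / (v * w * (v + w)))
    by (field; lra).
  assert (0 <= (x * w - y * v) ^ 2 / (v * w * (v + w))).
  { apply Rmult_le_pos; [apply pow2_ge_0 | left; apply Rinv_0_lt_compat].
    repeat apply Rmult_lt_0_compat; lra. }
  lra.
Qed.

Lemma one_sub_exp_opp_le (x y : R) : x <= y -> 1 - exp (- x) <= 1 - exp (- y).
Proof.
  intros [Hlt | <-]; [| lra].
  apply Rplus_le_compat_l, Ropp_le_contravar, Rlt_le, exp_increasing; lra.
Qed.

Definition exponent (rho eps0 lam1 lam2 beta : R) : R :=
  lam2 * A_fun rho eps0 beta + lam1 * zeta_fun rho eps0 beta.

Lemma objective_exponent (rho eps0 lam1 lam2 beta : R) : beta <> 1 ->
  objective rho eps0 lam1 lam2 beta = 1 - exp (- exponent rho eps0 lam1 lam2 beta).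
Proof.
  intros Hne. unfold objective. destruct (Req_EM_T beta 1); [contradiction | reflexivity].
Qed.

Lemma objective_at1 (rho eps0 lam1 lam2 : R) : objective rho eps0 lam1 lam2 1 = 1.
Proof. unfold objective. destruct (Req_EM_T 1 1); [reflexivity | contradiction]. Qed.

Lemma objective_le1 (rho eps0 lam1 lam2 beta : R) :
  objective rho eps0 lam1 lam2 beta <= 1.
Proof.
  unfold objective. destruct (Req_EM_T beta 1); [lra |].
  pose proof (exp_pos (- (lam2 * A_fun rho eps0 beta + lam1 * zeta_fun rho eps0 beta))).
  lra.
Qed.

Section Optimum.

Variables rho eps0 lam1 lam2 : R.
Hypotheses (rho_gt0 : 0 < rho) (eps0_gt0 : 0 < eps0)
  (lam1_gt0 : 0 < lam1) (lam1_lt_lam2 : lam1 < lam2)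
  (lam1_eps0_neq_lam2 : lam1 * (1 + eps0) <> lam2).

Let a := sqrt lam1.
Let b := sqrt lam2.
Let s := sqrt (1 + eps0).

Let a_gt0 : 0 < a. Proof. apply sqrt_lt_R0; lra. Qed.
Let b_gt0 : 0 < b. Proof. apply sqrt_lt_R0; lra. Qed.
Let a_sqr : a * a = lam1. Proof. apply sqrt_sqrt; lra. Qed.
Let b_sqr : b * b = lam2. Proof. apply sqrt_sqrt; lra. Qed.
Let s_sqr : s * s = 1 + eps0. Proof. apply sqrt_sqrt; lra. Qed.
Let s_gt1 : 1 < s. Proof. rewrite <- sqrt_1. apply sqrt_lt_1; lra. Qed.
Let a_lt_b : a < b. Proof. apply sqrt_lt_1; lra. Qed.

Lemma exponent_ge_min (beta : R) : feasible eps0 beta -> beta <> 1 ->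
  eps0 / rho * (b + a * s) ^ 2 <= exponent rho eps0 lam1 lam2 beta.
Proof.
  intros [[_ Hle1] Hgap] Hne.
  set (u := 1 - beta). set (v := beta - (1 - beta) * eps0).
  assert (Hu : 0 < u) by (unfold u; destruct Hle1; [lra | contradiction]).
  assert (Hv : 0 < v) by (unfold v; lra).
  assert (Hsum : v + s ^ 2 * u = 1) by (unfold u, v; nra).
  assert (Hdrop : eps0 / rho * (b ^ 2 / v + (a * s) ^ 2 / (s ^ 2 * u))
                  <= exponent rho eps0 lam1 lam2 beta).
  { unfold exponent, zeta_fun, A_fun, B_fun. fold u v.
    replace (eps0 / rho * (b ^ 2 / v + (a * s) ^ 2 / (s ^ 2 * u)))
      with (lam2 * (eps0 / (rho * v)) + lam1 * (eps0 / (rho * u)))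
      by (rewrite <- a_sqr, <- b_sqr; field; lra).
    apply Rplus_le_compat_l, Rmult_le_compat_l, Rmax_r; lra. }
  eapply Rle_trans; [| exact Hdrop].
  apply Rmult_le_compat_l; [left; apply Rdiv_lt_0_compat; lra |].
  rewrite <- (Rdiv_1_r ((b + a * s) ^ 2)), <- Hsum.
  apply Rsqr_plus_div_le; nra.
Qed.

Lemma one_sub_beta_star :
  1 - beta_star eps0 lam1 lam2 = a / (s * (a * s + b)).
Proof.
  assert (Hden : a * s - b <> 0).
  { intro Hzero. apply lam1_eps0_neq_lam2.
    rewrite <- a_sqr, <- b_sqr, <- s_sqr. nra. }
  unfold beta_star. fold s. rewrite sqrt_mult by lra. fold a b.
  replace eps0 with (s * s - 1) by lra. rewrite <- a_sqr, <- b_sqr.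
  field. repeat split; nra.
Qed.

Lemma beta_star_gap :
  beta_star eps0 lam1 lam2 - (1 - beta_star eps0 lam1 lam2) * eps0 = b / (a * s + b).
Proof.
  replace (beta_star eps0 lam1 lam2 - (1 - beta_star eps0 lam1 lam2) * eps0)
    with (1 - s * s * (1 - beta_star eps0 lam1 lam2)) by (rewrite s_sqr; ring).
  rewrite one_sub_beta_star. field. nra.
Qed.

Lemma one_sub_beta_star_gt0 : 0 < 1 - beta_star eps0 lam1 lam2.
Proof. rewrite one_sub_beta_star. apply Rdiv_lt_0_compat; nra. Qed.

Lemma beta_star_neq1 : beta_star eps0 lam1 lam2 <> 1.
Proof. pose proof one_sub_beta_star_gt0; lra. Qed.

Lemma feasible_beta_star : feasible eps0 (beta_star eps0 lam1 lam2).
Proof.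
  pose proof one_sub_beta_star_gt0 as Hu.
  assert (Hgap : 0 < b / (a * s + b)) by (apply Rdiv_lt_0_compat; nra).
  rewrite <- beta_star_gap in Hgap.
  split; [split |]; nra.
Qed.

Lemma exponent_beta_star :
  exponent rho eps0 lam1 lam2 (beta_star eps0 lam1 lam2) = eps0 / rho * (b + a * s) ^ 2.
Proof.
  unfold exponent, zeta_fun, A_fun, B_fun.
  rewrite beta_star_gap, one_sub_beta_star.
  rewrite Rmax_right.
  - rewrite <- a_sqr, <- b_sqr. field. repeat split; nra.
  - (* A <= B reduces to a <= b s *)
    apply Rmult_le_compat_l; [lra |].
    apply Rinv_le_contravar; [apply Rmult_lt_0_compat, Rdiv_lt_0_compat; nra |].
    apply Rmult_le_compat_l; [lra |].
    apply Rmult_le_reg_r with (s * (a * s + b)); [nra |].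
    unfold Rdiv. rewrite !Rmult_assoc, Rinv_l by nra.
    replace (b * (/ (a * s + b) * (s * (a * s + b)))) with (b * s) by (field; nra).
    nra.
Qed.

End Optimum.

Theorem corollary2 (rho eps0 lam1 lam2 : R) :
  0 < rho -> 0 < eps0 -> 0 < lam1 -> lam1 < lam2 ->
  lam1 * (1 + eps0) <> lam2 ->
  feasible eps0 (beta_star eps0 lam1 lam2) /\
  (forall beta, feasible eps0 beta ->
     objective rho eps0 lam1 lam2 (beta_star eps0 lam1 lam2)
     <= objective rho eps0 lam1 lam2 beta).
Proof.
  intros Hrho Heps0 Hlam1 Hlam12 Hne.
  split; [apply feasible_beta_star; assumption |].
  intros beta Hbeta.
  destruct (Req_EM_T beta 1) as [-> | Hbeta1].
  - rewrite objective_at1. apply objective_le1.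
  - rewrite !objective_exponent by auto using beta_star_neq1.
    apply one_sub_exp_opp_le.
    rewrite exponent_beta_star by assumption.
    apply exponent_ge_min; assumption.
Qed.
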